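(* There exist binary-input discrete memoryless channels $W$ and $V$ with a common finite output alphabet, both symmetrized by the same involutive permutation of the output alphabet, such that $$C_P(W,V) > C(W,V).$$
   Context: A binary-input discrete memoryless channel (B-DMC) $W:\{0,1\}\to\mathcal{Y}$ is given by transition probabilities $W(y|x)$. $W$ and $V$ are symmetrized by the same permutation if there is a permutation $\pi$ of $\mathcal{Y}$ with $\pi=\pi^{-1}$ and $W(y|0)=W(\pi(y)|1)$, $V(y|0)=V(\pi(y)|1)$ for all $y$. Mismatched capacity $C(W,V)$: the supremum of rates $R$ such that for every $\epsilon>0$ and all sufficiently large $n$ there is a codebook $\{\mathbf{x}(1),\dots,\mathbf{x}(M)\}\subset\{0,1\}^n$ with $\frac{\log M}{n}>R$ and maximal error probability less than $\epsilon$ over the memoryless channel $W$, when decoded by outputting the unique $i$ with $\prod_k V(y_k|x_k(i))>\prod_k V(y_k|x_k(j))$ for all $j\neq i$ (erasure/error if no such $i$). Polar transforms: $W^-(y_1y_2|u_1)=\sum_{u_2\in\mathbb{F}_2}\tfrac12 W(y_1|u_1\oplus u_2)W(y_2|u_2)$, $W^+(y_1y_2u_1|u_2)=\tfrac12 W(y_1|u_1\oplus u_2)W(y_2|u_2)$; iterating, for $N=2^n$ one obtains synthetic channels $W_N^{(i)}$, $i=1,\dots,N$ (the channels $W^{s}$, $s\in\{+,-\}^n$, in Arıkan's ordering), and similarly $V_N^{(i)}$ from $V$. Polar mismatched capacity $C_P(W,V)$: a polar code of blocklength $N=2^n$ uses Arıkan's polar encoder with an information set $\mathcal{A}\subseteq\{1,\dots,N\}$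 carrying data and the remaining inputs frozen to known values; the transmitted word is sent over $N$ independent uses of $W$. The mismatched successive cancellation decoder designed for $V$ decodes $\hat u_i=u_i$ for $i\notin\mathcal{A}$ and, for $i\in\mathcal{A}$, $\hat u_i=f^{(i)}(y_1^N,\hat u_1^{i-1})$ where $f^{(i)}$ is the maximum-likelihood decision rule for the synthetic channel $V_N^{(i)}$ (rather than $W_N^{(i)}$). $C_P(W,V)$ is the supremum of rates $|\mathcal{A}|/N$ achievable by such polar codes with block error probability tending to $0$ as $N\to\infty$. *)

From HB Require Import structures.
From mathcomp Require Import all_boot all_order all_algebra.
From mathcomp Require Import classical_sets reals ereal exp.
Set Implicit Arguments. Unset Strict Implicit. Unset Printing Implicit Defensive.
Import Order.TTheory GRing.Theory Num.Theory.
Local Open Scope ring_scope.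

Section Channels.
Variable R : realType.

(* A binary-input DMC W : {0,1} -> Y, input 0 = false, 1 = true. *)
Definition is_BDMC (Y : finType) (W : bool -> Y -> R) : Prop :=
  (forall x y, 0 <= W x y) /\ (forall x, \sum_(y : Y) W x y = 1).

Definition symmetrized_by_same_perm (Y : finType) (W V : bool -> Y -> R) : Prop :=
  exists pi : Y -> Y, involutive pi /\
    (forall y, W false y = W true (pi y)) /\ (forall y, V false y = V true (pi y)).

Definition chan_n (Y : finType) (W : bool -> Y -> R) (n : nat)
  (x : {ffun 'I_n -> bool}) (y : {ffun 'I_n -> Y}) : R :=
  \prod_(k < n) W (x k) (y k).

Definition log2 (x : R) : R := ln x / ln 2.

(* the mismatched decoder designed for V outputs i iff V^n(y|x(i)) > V^n(y|x(j))
   for all j <> i; [mis_correct] says it outputs the transmitted index i. *)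
Definition mis_correct (Y : finType) (V : bool -> Y -> R) (n M : nat)
  (c : 'I_M -> {ffun 'I_n -> bool}) (i : 'I_M) (y : {ffun 'I_n -> Y}) : bool :=
  [forall j : 'I_M, (j != i) ==> (chan_n V (c j) y < chan_n V (c i) y)].

Definition mis_err (Y : finType) (W V : bool -> Y -> R) (n M : nat)
  (c : 'I_M -> {ffun 'I_n -> bool}) (i : 'I_M) : R :=
  \sum_(y : {ffun 'I_n -> Y} | ~~ mis_correct V c i y) chan_n W (c i) y.

Definition mis_achievable (Y : finType) (W V : bool -> Y -> R) (r : R) : Prop :=
  forall eps : R, 0 < eps -> exists n0 : nat, forall n : nat, (n0 <= n)%N ->
    exists (M : nat) (c : 'I_M -> {ffun 'I_n -> bool}),
      [/\ (0 < M)%N, injective c,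
          log2 M%:R / n%:R > r &
          forall i : 'I_M, mis_err W V c i < eps].

Definition mis_capacity (Y : finType) (W V : bool -> Y -> R) : \bar R :=
  ereal_sup [set (r%:E) | r in mis_achievable W V].

(* k-th binary digit (k = 0 is the least significant) *)
Definition bitn (i k : nat) : bool := odd (i %/ 2 ^ k).

(* Arikan's generator matrix G_N = B_N F^{(x)n}, N = 2^n, 0-indexed:
   (F^{(x)n})_{a,b} = [bits of b are contained in bits of a],
   B_N is the bit-reversal permutation of rows. *)
Definition Gpolar (n : nat) (i j : 'I_(2 ^ n)) : bool :=
  [forall k : 'I_n, bitn j k ==> bitn i (n - 1 - k)].

Definition polar_enc (n : nat) (u : {ffun 'I_(2 ^ n) -> bool}) : {ffun 'I_(2 ^ n) -> bool} :=
  [ffun j => \big[addb/false]_(i < 2 ^ n) (u i && Gpolar i j)].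

(* synthetic channel W_N^{(i)}(y_1^N, u_1^{i-1} | u_i = a) (Arikan, eq. (5));
   only the entries p_j, j < i, of the past vector p matter. *)
Definition synth (Y : finType) (W : bool -> Y -> R) (n : nat) (i : 'I_(2 ^ n))
  (y : {ffun 'I_(2 ^ n) -> Y}) (p : {ffun 'I_(2 ^ n) -> bool}) (a : bool) : R :=
  \sum_(u : {ffun 'I_(2 ^ n) -> bool} |
          [forall j : 'I_(2 ^ n), (j < i)%N ==> (u j == p j)] && (u i == a))
     (2 ^ (2 ^ n).-1)%:R^-1 * chan_n W (polar_enc u) y.

(* ML decision for the synthetic channel V_N^{(i)} (ties decided as 0) *)
Definition ml_dec (Y : finType) (V : bool -> Y -> R) (n : nat) (i : 'I_(2 ^ n))
  (y : {ffun 'I_(2 ^ n) -> Y}) (p : {ffun 'I_(2 ^ n) -> bool}) : bool :=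
  ~~ (synth V i y p true <= synth V i y p false).

(* mismatched successive cancellation decoder designed for V, information set A,
   frozen values taken from u (u_i for i \notin A is known to the decoder).
   [sc_aux k] holds the decisions for the indices < k (other entries false). *)
Fixpoint sc_aux (Y : finType) (V : bool -> Y -> R) (n : nat) (A : {set 'I_(2 ^ n)})
  (frozen : {ffun 'I_(2 ^ n) -> bool}) (y : {ffun 'I_(2 ^ n) -> Y}) (k : nat)
  : {ffun 'I_(2 ^ n) -> bool} :=
  match k with
  | 0 => [ffun => false]
  | k'.+1 =>
      let prev := sc_aux V A frozen y k' in
      [ffun j : 'I_(2 ^ n) =>
         if (j < k')%N then prev j
         else if (nat_of_ord j == k') then
                (if j \in A then ml_dec V j y prev else frozen j)
         else false]
  end.

Definition sc_decode (Y : finType) (V : bool -> Y -> R) (n : nat) (A : {set 'I_(2 ^ n)})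
  (frozen : {ffun 'I_(2 ^ n) -> bool}) (y : {ffun 'I_(2 ^ n) -> Y})
  : {ffun 'I_(2 ^ n) -> bool} := sc_aux V A frozen y (2 ^ n).

(* block error probability of the polar code (A, frozen values fr) over W with
   the mismatched SC decoder for V: data bits u_A uniform, frozen u_i = fr i. *)
Definition polar_block_err (Y : finType) (W V : bool -> Y -> R) (n : nat)
  (A : {set 'I_(2 ^ n)}) (fr : {ffun 'I_(2 ^ n) -> bool}) : R :=
  \sum_(u : {ffun 'I_(2 ^ n) -> bool} | [forall i : 'I_(2 ^ n), (i \notin A) ==> (u i == fr i)])
    (2 ^ #|A|)%:R^-1 *
    \sum_(y : {ffun 'I_(2 ^ n) -> Y} | sc_decode V A u y != u)
       chan_n W (polar_enc u) y.

Definition polar_achievable (Y : finType) (W V : bool -> Y -> R) (r : R) : Prop :=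
  exists (A : forall n : nat, {set 'I_(2 ^ n)}) (fr : forall n : nat, {ffun 'I_(2 ^ n) -> bool}),
    (exists n0 : nat, forall n : nat, (n0 <= n)%N -> r <= #|A n|%:R / (2 ^ n)%:R) /\
    (forall eps : R, 0 < eps -> exists n0 : nat, forall n : nat, (n0 <= n)%N ->
       polar_block_err W V (A n) (fr n) < eps).

Definition polar_capacity (Y : finType) (W V : bool -> Y -> R) : \bar R :=
  ereal_sup [set (r%:E) | r in polar_achievable W V].

End Channels.

(* Take W noiseless and V the channel that always flips the input bit.  On W's
   output y = x(i) the transmitted codeword has V-likelihood 0, so the decoder
   designed for V never returns i once there are two codewords: no nonnegative
   rate is mismatched-achievable.  For polar codes, the last row
   of Arikan's matrix is all ones, so the complement of x = u G_N is
   (u + e_N) G_N; the V-likelihood of a past-consistent u' is nonzero only for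
   u' = u + e_N, which agrees with u except at the last index.  Hence every
   synthetic decision but the last one is correct, and freezing the last index
   gives an error-free code of rate 1 - 1/N. *)
From HB Require Import structures.
From mathcomp Require Import all_boot all_order all_algebra.
From mathcomp Require Import classical_sets reals ereal exp.
From mathcomp Require Import lra zify.
Import Order.TTheory GRing.Theory Num.Theory.

Lemma bitn0 i : bitn i 0 = odd i.
Proof. by rewrite /bitn expn0 divn1. Qed.

Lemma bitnS i k : bitn i k.+1 = bitn i./2 k.
Proof. by rewrite /bitn expnS divnMA divn2. Qed.

Lemma leq_bitn_sub n a b : a < 2 ^ n ->
  (forall m, m < n -> bitn a m -> bitn b m) -> a <= b.
Proof.
elim: n a b => [|n IHn] a b ha hab.
  by move: ha; rewrite expn0 ltnS leqn0 => /eqP ->.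
have odd_ab : odd a -> odd b by rewrite -!bitn0; apply: hab.
have half_ab : a./2 <= b./2.
  apply: IHn => [|m hm]; last by rewrite -!bitnS; apply: hab.
  by move: ha; rewrite expnS -{1}(odd_double_half a) -mul2n; lia.
rewrite -(odd_double_half a) -(odd_double_half b) -!muln2.
by move: odd_ab; case: (odd a); case: (odd b) => /= odd_ab;
  [lia | by have := odd_ab isT | lia | lia].
Qed.

Lemma bitn_exists n (f : nat -> bool) :
  exists2 j, j < 2 ^ n & forall k, k < n -> bitn j k = f k.
Proof.
elim: n f => [|n IHn] f; first by exists 0.
have [j hj bitj] := IHn (fun k => f k.+1).
exists (f 0 + j.*2) => [|[|k] hk].
- by rewrite expnS -mul2n; case: (f 0); lia.
- by rewrite bitn0 oddD odd_double addbF; case: (f 0).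
- by rewrite bitnS half_bit_double bitj.
Qed.

Lemma bitn_pred_exp2 n m : m < n -> bitn (2 ^ n).-1 m.
Proof.
elim: m n => [|m IHm] [|n] // hmn.
  by rewrite bitn0 -[odd _]negbK -oddS prednK ?expn_gt0 // oddX.
rewrite bitnS (_ : _./2 = (2 ^ n).-1) ?IHm //.
by rewrite expnS -divn2; have := expn_gt0 2 n; lia.
Qed.

Definition ffxor {n} (u v : {ffun 'I_n -> bool}) : {ffun 'I_n -> bool} :=
  [ffun i => u i (+) v i].

Lemma pred_exp2_lt n : (2 ^ n).-1 < 2 ^ n.
Proof. by rewrite ltn_predL expn_gt0. Qed.

Definition ord_last n : 'I_(2 ^ n) := Ordinal (pred_exp2_lt n).

Definition delta_last n : {ffun 'I_(2 ^ n) -> bool} := [ffun i => i == ord_last n].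

Lemma polar_enc_xor n (u v : {ffun 'I_(2 ^ n) -> bool}) :
  polar_enc (ffxor u v) = ffxor (polar_enc u) (polar_enc v).
Proof.
apply/ffunP => j; rewrite !ffunE -big_split /=.
by apply: eq_bigr => i _; rewrite ffunE andb_addl.
Qed.

Lemma Gpolar_last n j : Gpolar (ord_last n) j.
Proof.
apply/forallP => k; apply/implyP => _; apply: bitn_pred_exp2.
by have := ltn_ord k; lia.
Qed.

Lemma polar_enc_delta_last n : polar_enc (delta_last n) = [ffun => true].
Proof.
apply/ffunP => j; rewrite !ffunE (eq_bigr (fun i => (i == ord_last n) && Gpolar i j)).
  by rewrite -big_mkcond big_pred1_eq Gpolar_last.
by move=> i _; rewrite ffunE.
Qed.

(* The column whose bits are the reversed bits of i0 is supported on rows i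
   whose bits contain those of i0; this makes G_N triangular. *)
Lemma Gpolar_triangular {n} (i0 : 'I_(2 ^ n)) :
  exists j, Gpolar i0 j /\ forall i, Gpolar i j -> i0 <= i.
Proof.
have [j hj bitj] := bitn_exists n (fun k => bitn i0 (n - 1 - k)).
exists (Ordinal hj); split.
  by apply/forallP => k; apply/implyP; rewrite /= bitj.
move=> i /forallP Gij; apply: leq_bitn_sub (ltn_ord i0) _ => m hm bit_m.
have hk : n - 1 - m < n by lia.
have := implyP (Gij (Ordinal hk)); rewrite /= bitj // subKn; [exact | lia].
Qed.

Lemma polar_enc_eq0 n (w : {ffun 'I_(2 ^ n) -> bool}) :
  polar_enc w = [ffun => false] -> w = [ffun => false].
Proof.
move=> enc_w; apply/ffunP => i1; rewrite ffunE; apply/negP => w_i1.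
case: (arg_maxnP (fun i : 'I_(2 ^ n) => val i) w_i1) => i0 w_i0 i0_max.
have [j [G_i0j G_j]] := Gpolar_triangular i0.
move/ffunP/(_ j): enc_w; rewrite !ffunE.
rewrite (eq_bigr (fun i => if i == i0 then true else false)) => [|i _].
  by rewrite -big_mkcond big_pred1_eq.
have [-> | ne] := eqVneq i i0; first by rewrite w_i0 G_i0j.
apply/negP => /andP[w_i /G_j le_i0i]; case/eqP: ne; apply: val_inj.
by apply/eqP; rewrite eqn_leq le_i0i andbT; apply: i0_max.
Qed.

Lemma polar_enc_inj n : injective (@polar_enc n).
Proof.
move=> u v euv; apply/ffunP => i.
suff /ffunP/(_ i) : ffxor u v = [ffun => false].
  by rewrite !ffunE; case: (u i); case: (v i).
apply: polar_enc_eq0; rewrite polar_enc_xor euv.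
by apply/ffunP => j; rewrite !ffunE addbb.
Qed.

Local Open Scope ring_scope.

Definition noiseless_chan (R : realType) (x y : bool) : R := (y == x)%:R.
Definition flip_chan (R : realType) (x y : bool) : R := (y != x)%:R.

Lemma is_BDMC_noiseless (R : realType) : is_BDMC (noiseless_chan R).
Proof.
split=> [x y|x]; first by rewrite ler0n.
by rewrite big_bool; case: x; rewrite /noiseless_chan /= ?addr0 ?add0r.
Qed.

Lemma is_BDMC_flip (R : realType) : is_BDMC (flip_chan R).
Proof.
split=> [x y|x]; first by rewrite ler0n.
by rewrite big_bool; case: x; rewrite /flip_chan /= ?addr0 ?add0r.
Qed.

Lemma symmetrized_noiseless_flip (R : realType) :
  symmetrized_by_same_perm (noiseless_chan R) (flip_chan R).
Proof. by exists negb; split; [exact: negbK | split; case]. Qed.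

Lemma prodr_nat_of_bool (R : comPzSemiRingType) n (b : 'I_n -> bool) :
  \prod_(k < n) ((b k)%:R : R) = [forall k, b k]%:R.
Proof.
have [/forallP b_all | /forallPn [k bNk]] := boolP [forall k, b k].
  by rewrite big1 // => k _; rewrite b_all.
by rewrite (bigD1 k) //= (negbTE bNk) mul0r.
Qed.

Lemma sum_nat_of_eq (R : pzSemiRingType) (T : finType) (P : pred T) (t : T) :
  \sum_(x | P x) ((x == t)%:R : R) = (P t)%:R.
Proof.
rewrite big_mkcond (bigD1 t) //= eqxx big1 ?addr0 => [|x /negbTE ->].
  by case: (P t).
by case: (P x).
Qed.

Lemma chan_n_noiseless (R : realType) n (x y : {ffun 'I_n -> bool}) :
  chan_n (noiseless_chan R) x y = (y == x)%:R.
Proof.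
rewrite /chan_n prodr_nat_of_bool; congr (nat_of_bool _)%:R.
apply/forallP/eqP => [xy | -> k //]; apply/ffunP => k; exact/eqP.
Qed.

Lemma chan_n_flip (R : realType) n (x y : {ffun 'I_n -> bool}) :
  chan_n (flip_chan R) x y = [forall k, y k != x k]%:R.
Proof. exact: prodr_nat_of_bool. Qed.

Section FlipPolar.
Variables (R : realType) (n : nat).
Implicit Types (u p : {ffun 'I_(2 ^ n) -> bool}) (i : 'I_(2 ^ n)).

Lemma chan_n_flip_polar_enc u' u :
  chan_n (flip_chan R) (polar_enc u') (polar_enc u) =
  (u' == ffxor u (delta_last n))%:R.
Proof.
rewrite chan_n_flip; congr (nat_of_bool _)%:R.
rewrite -(inj_eq (@polar_enc_inj n) u') polar_enc_xor polar_enc_delta_last.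
move: (polar_enc u) (polar_enc u') => e e'.
apply/forallP/eqP => [ee' | -> k]; last by rewrite /ffxor !ffunE; case: (e k).
apply/ffunP => k; rewrite /ffxor !ffunE.
by move: (ee' k); case: (e k); case: (e' k).
Qed.

Lemma synth_flip i u p (a : bool) : i != ord_last n ->
  (forall j : 'I_(2 ^ n), (j < i)%N -> p j = u j) ->
  synth (flip_chan R) i (polar_enc u) p a = (2 ^ (2 ^ n).-1)%:R^-1 * (a == u i)%:R.
Proof.
move=> i_last p_past; set us := ffxor u (delta_last n).
have us_u j : j != ord_last n -> us j = u j.
  by move=> j_last; rewrite /ffxor !ffunE (negbTE j_last) addbF.
have us_past : [forall j : 'I_(2 ^ n), (j < i)%N ==> (us j == p j)].
  apply/forallP => j; apply/implyP => j_i; rewrite us_u ?p_past //.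
  by apply: contraTneq j_i => /= ->; rewrite -leqNgt -ltnS prednK ?expn_gt0.
rewrite /synth; under eq_bigr do rewrite chan_n_flip_polar_enc.
by rewrite -big_distrr /= sum_nat_of_eq -/us us_past us_u // eq_sym.
Qed.

Lemma ml_dec_flip i u p : i != ord_last n ->
  (forall j : 'I_(2 ^ n), (j < i)%N -> p j = u j) ->
  ml_dec (flip_chan R) i (polar_enc u) p = u i.
Proof.
move=> i_last p_past; rewrite /ml_dec !synth_flip //.
have K_gt0 : 0 < (2 ^ (2 ^ n).-1)%:R^-1 :> R by rewrite invr_gt0 ltr0n expn_gt0.
by case: (u i); rewrite /= ?mulr1 ?mulr0 -ltNge ?K_gt0 // lt_gtF.
Qed.

Lemma sc_aux_flip u k (j : 'I_(2 ^ n)) :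
  sc_aux (flip_chan R) [set~ ord_last n] u (polar_enc u) k j =
  if (j < k)%N then u j else false.
Proof.
elim: k j => [|k IHk] j; first by rewrite ffunE.
rewrite /= ffunE IHk.
have [j_lt_k | ] := ltnP j k; first by rewrite ltnS ltnW.
rewrite leq_eqVlt => /orP[/eqP k_j | k_lt_j]; last first.
  by rewrite ltnS leqNgt k_lt_j gtn_eqF.
rewrite -k_j eqxx ltnSn; case: ifP => //; rewrite !inE => j_last.
by rewrite ml_dec_flip // => j' j'_j; rewrite IHk k_j j'_j.
Qed.

Lemma sc_decode_flip u :
  sc_decode (flip_chan R) [set~ ord_last n] u (polar_enc u) = u.
Proof. by apply/ffunP => j; rewrite /sc_decode sc_aux_flip ltn_ord. Qed.

Lemma polar_block_err_noiseless_flip fr :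
  polar_block_err (noiseless_chan R) (flip_chan R) [set~ ord_last n] fr = 0.
Proof.
rewrite /polar_block_err big1 // => u _; rewrite big1 ?mulr0 // => y.
rewrite chan_n_noiseless; have [-> | //] := eqVneq y (polar_enc u).
by rewrite sc_decode_flip eqxx.
Qed.
End FlipPolar.

Lemma rate_setC1_ord_last (R : realFieldType) n : (0 < n)%N ->
  1 / 2 <= #|[set~ ord_last n]|%:R / (2 ^ n)%:R :> R.
Proof.
move=> n_gt0; rewrite cardsC1 card_ord ler_pdivlMr ?ltr0n ?expn_gt0 //.
have : (2 <= 2 ^ n)%N by rewrite -{1}(expn1 2) leq_exp2l.
case: (2 ^ n)%N => [|[|m]] // _; rewrite /= -[m.+2]addn2 -[m.+1]addn1 !natrD.
by have := ler0n R m; lra.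
Qed.

Lemma polar_achievable_noiseless_flip (R : realType) :
  polar_achievable (noiseless_chan R) (flip_chan R) (1 / 2).
Proof.
exists (fun n => [set~ ord_last n]), (fun n => [ffun => false]); split.
  by exists 1%N => n; apply: rate_setC1_ord_last.
by move=> eps eps_gt0; exists 0%N => n _; rewrite polar_block_err_noiseless_flip.
Qed.

Lemma mis_achievable_noiseless_flip_lt0 (R : realType) (r : R) :
  mis_achievable (noiseless_chan R) (flip_chan R) r -> r < 0.
Proof.
move=> /(_ 1 ltr01) [n0 /(_ n0.+1 (leqnSn _)) [M [c [M_gt0 _ rate err]]]].
have [M_gt1 | ] := ltnP 1 M; last first.
  move=> M_le1; have M1 : M = 1%N by lia.
  by move: rate; rewrite M1 /log2 ln1 !mul0r.
pose i0 := Ordinal M_gt0; pose i1 := Ordinal M_gt1.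
have wrong_at_ci0 : ~~ mis_correct (flip_chan R) c i0 (c i0).
  apply/forallPn; exists i1; rewrite negb_imply -leNgt !chan_n_flip.
  have -> : [forall k, c i0 k != c i0 k] = false.
    by apply/negbTE/forallPn; exists ord0; rewrite eqxx.
  by rewrite ler0n.
have := err i0; rewrite /mis_err (bigD1 (c i0)) //= chan_n_noiseless eqxx.
by rewrite ltNge lerDl sumr_ge0 // => y _; rewrite chan_n_noiseless ler0n.
Qed.

Theorem mainTheorem2 (R : realType) :
  exists (Y : finType) (W V : bool -> Y -> R),
    [/\ is_BDMC W, is_BDMC V, symmetrized_by_same_perm W V &
        (mis_capacity W V < polar_capacity W V)%E].
Proof.
exists bool, (noiseless_chan R), (flip_chan R); split.
- exact: is_BDMC_noiseless.
- exact: is_BDMC_flip.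
- exact: symmetrized_noiseless_flip.
have mis_le0 : (mis_capacity (noiseless_chan R) (flip_chan R) <= 0%:E)%E.
  apply: ge_ereal_sup => _ [r /mis_achievable_noiseless_flip_lt0 r_lt0 <-].
  by rewrite lee_fin ltW.
have polar_ge_half : ((1 / 2 : R)%:E <= polar_capacity (noiseless_chan R) (flip_chan R))%E.
  by apply: ereal_sup_ubound; exists (1 / 2) => //; exact: polar_achievable_noiseless_flip.
by apply: (le_lt_trans mis_le0); apply: lt_le_trans polar_ge_half; rewrite lte_fin; lra.
Qed.
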